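(* Let $\operatorname{Erf}$, $u_k\in\mathbb{Q}[x,y]$ and $v_k\in\mathbb{Q}[y]$ be as defined in the context. For $n,m\in\mathbb{N}_0$ define polynomials $p_{n,m}=p^u_{n,m}+p^v_{n,m}$ and $q_{n,m}=q^u_{n,m}+q^v_{n,m}$ in $\mathbb{Q}[x,y]$ as follows: expand $u_n(x,y)\,y^m=\sum_k \alpha_k(x)y^k$ and $v_n(y)\,y^m=\sum_k\beta_k y^k$ in powers of $y$, and set \[ p^u_{n,m}(x,y)=\sum_k\alpha_k(x)\,u_k(y,x),\qquad q^u_{n,m}(x,y)=-\sum_k\alpha_k(x)\,v_k(x), \] \[ p^v_{n,m}(x,y)=\sum_k\beta_k\frac{u_{k+1}(y,x)}{k+1},\qquad q^v_{n,m}(x,y)=\sum_k\beta_k\frac{y^{k+1}-v_{k+1}(x)}{k+1}. \] Then $p_{n,m}$ has degree $n+m$, $q_{n,m}$ has degree $n+m+1$, and \[ \iint x^ny^me^{-(x-y)^2}\,dx\,dy=p_{n,m}(x,y)e^{-(x-y)^2}+q_{n,m}(x,y)\operatorname{Erf}(x-y), \] in the sense that $\partial_x\partial_y$ of the right-hand side equals $x^ny^me^{-(x-y)^2}$.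
   Context: $\operatorname{Erf}(\xi)=\int_0^\xi e^{-x^2}\,dx$. The polynomials $u_k\in\mathbb{Q}[x,y]$ and $v_k\in\mathbb{Q}[y]$ are defined by $u_0=0$, $v_0=1$, $u_{k+1}(x,y)=y\,u_k(x,y)+\frac k2u_{k-1}(x,y)-\frac{x^k}{2}$, $v_{k+1}(y)=y\,v_k(y)+\frac k2v_{k-1}(y)$ (for $k=0$ the terms with index $-1$ are multiplied by $0$). The notation $u_k(y,x)$ means $u_k$ with its two arguments interchanged, and $v_k(x)$ means $v_k$ evaluated at $x$. *)

From HB Require Import structures.
From mathcomp Require Import all_boot all_order all_algebra polyXY.
From mathcomp Require Import Rstruct.
From Stdlib Require Rdefinitions.
Set Implicit Arguments. Unset Strict Implicit. Unset Printing Implicit Defensive.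
Import GRing.Theory Num.Theory.

Local Open Scope ring_scope.

(* Convention: a bivariate polynomial P(x,y) in Q[x,y] is represented as
   P : {poly {poly rat}}, where the OUTER indeterminate 'X is y and the inner
   one (the coefficient polynomials) is x, i.e.  P = \sum_k P`_k(x) y^k.
   Hence P`_k is exactly the coefficient of y^k ("expansion in powers of y"). *)
Notation bipoly := {poly {poly rat}}.

Definition Yv : bipoly := 'X.
Definition Xv : bipoly := ('X)%:P.

(* (u_{k-1}, u_k), with the (irrelevant) convention u_{-1} = 0 *)
Fixpoint u_aux (k : nat) : bipoly * bipoly :=
  match k with
  | 0 => (0, 0)
  | k'.+1 => let: (a, b) := u_aux k' in
             (b, Yv * b + (k'%:R / 2%:R)%:P%:P * a - (1 / 2%:R)%:P%:P * Xv ^+ k')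
  end.
Definition u (k : nat) : bipoly := (u_aux k).2.

(* (v_{k-1}, v_k), with v_{-1} = 0 *)
Fixpoint v_aux (k : nat) : {poly rat} * {poly rat} :=
  match k with
  | 0 => (0, 1)
  | k'.+1 => let: (a, b) := v_aux k' in (b, 'X * b + (k'%:R / 2%:R)%:P * a)
  end.
Definition v (k : nat) : {poly rat} := (v_aux k).2.

Definition u_swap (k : nat) : bipoly := swapXY (u k).
Definition v_at_x (k : nat) : bipoly := (v k)%:P.

Definition alpha (n m k : nat) : {poly rat} := (u n * 'X ^+ m)`_k.
Definition beta (n m k : nat) : rat := (v n * 'X ^+ m)`_k.

Definition pu (n m : nat) : bipoly :=
  \sum_(k < size (u n * 'X ^+ m)) (alpha n m k)%:P * u_swap k.
Definition qu (n m : nat) : bipoly :=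
  - \sum_(k < size (u n * 'X ^+ m)) (alpha n m k)%:P * v_at_x k.
Definition pv (n m : nat) : bipoly :=
  \sum_(k < size (v n * 'X ^+ m))
     (beta n m k / k.+1%:R)%:P%:P * u_swap k.+1.
Definition qv (n m : nat) : bipoly :=
  \sum_(k < size (v n * 'X ^+ m))
     (beta n m k / k.+1%:R)%:P%:P * (Yv ^+ k.+1 - v_at_x k.+1).

Definition p (n m : nat) : bipoly := pu n m + pv n m.
Definition q (n m : nat) : bipoly := qu n m + qv n m.

(* Total degree, in the "size" convention of MathComp (size = degree + 1,
   and totsize P = 0 iff P = 0):  totsize P = max over monomials x^i y^j
   with nonzero coefficient of (i + j + 1). *)
Definition totsize (P : bipoly) : nat :=
  \max_(j < size P | (P`_j)%R != 0%R) addn (size (P`_j)%R) j.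

Definition evalXY (P : bipoly) (x y : Rdefinitions.R) : Rdefinitions.R :=
  \sum_(j < size P) \sum_(i < size P`_j) ratr (P`_j)`_i * x ^+ i * y ^+ j.

Local Close Scope ring_scope.
From Stdlib Require Import Reals.
From Coquelicot Require Import Coquelicot.
Local Open Scope R_scope.

Definition Erf (xi : R) : R := RInt (fun t => exp (- t ^ 2)) 0 xi.

(* Write U_k(x,y) and V_k(t) for the real evaluations of u_k and v_k.  Two-step
   induction on the recurrences gives the key identity
     d/dx U_k(x,y) = x^k + 2(x-y) U_k(x,y) - V_k(y).
   Hence U_k(y,x) e^{-(x-y)^2} - V_k(x) Erf(x-y) is a y-primitive of y^k e^{-(x-y)^2}
   and U_{k+1}(y,x) e^{-(x-y)^2} + (y^{k+1} - V_{k+1}(x)) Erf(x-y) one of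
   (k+1) y^k Erf(x-y).  Summing against the coefficients of u_n(x,y) y^m and
   v_n(y) y^m, the y-derivative of p e^{-(x-y)^2} + q Erf(x-y) is
   y^m (U_n(x,y) e^{-(x-y)^2} + V_n(y) Erf(x-y)), whose x-derivative is
   x^n y^m e^{-(x-y)^2} by the key identity again.
   For the degrees: u_k has total degree < k, the monomial x^k of u_{k+1} has
   coefficient -1/2, and v_k is monic of degree k.  So only the terms k = n+m of
   p^v and q^v reach total degree n+m resp. n+m+1, where they contribute the
   nonzero constants -1/(2(n+m+1)) at y^(n+m) resp. 1/(n+m+1) at y^(n+m+1). *)

From HB Require Import structures.
From mathcomp Require Import all_boot all_order all_algebra polyXY.
From mathcomp Require Import Rstruct.
From Stdlib Require Import Reals.
From Coquelicot Require Import Coquelicot.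
From mathcomp Require Import ring zify.
Set Implicit Arguments. Unset Strict Implicit. Unset Printing Implicit Defensive.
Import GRing.Theory Num.Theory.

Lemma is_derive_Erf z : is_derive Erf z (exp (- z ^ 2)).
Proof.
have cont w : continuous (fun t => exp (- t ^ 2)) w.
  apply: continuous_exp_comp; apply: continuous_opp.
  apply: continuous_mult; first exact: continuous_id.
  by apply: continuous_mult; [exact: continuous_id | exact: continuous_const].
apply: is_derive_RInt (cont z).
by apply: filter_forall => b; apply/RInt_correct/ex_RInt_continuous => w _.
Qed.

(* Importing Stdlib's reals rebinds the key [%N] to binary naturals. *)
Delimit Scope nat_scope with N.
Local Open Scope ring_scope.

Section RealDerivatives.
Implicit Types (f g : R -> R) (t a df dg : R).

Lemma is_derive_congr f g t df dg :
  f =1 g -> df = dg -> is_derive f t df -> is_derive g t dg.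
Proof. by move=> fg <-; apply: is_derive_ext. Qed.

Lemma is_deriveD f g t df dg : is_derive f t df -> is_derive g t dg ->
  is_derive (fun s => f s + g s) t (df + dg).
Proof. exact: is_derive_plus. Qed.

Lemma is_deriveB f g t df dg : is_derive f t df -> is_derive g t dg ->
  is_derive (fun s => f s - g s) t (df - dg).
Proof. exact: is_derive_minus. Qed.

Lemma is_deriveM f g t df dg : is_derive f t df -> is_derive g t dg ->
  is_derive (fun s => f s * g s) t (df * g t + f t * dg).
Proof. by move=> hf hg; apply: is_derive_mult hf hg Rmult_comm. Qed.

Lemma is_deriveZ f a t df : is_derive f t df ->
  is_derive (fun s => a * f s) t (a * df).
Proof. exact: is_derive_scal. Qed.

Lemma is_derive_cst a t : is_derive (fun=> a) t 0.
Proof. exact: is_derive_const. Qed.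

Lemma is_derive_exprn (n : nat) t : is_derive (fun s : R => s ^+ n) t (n%:R * t ^+ n.-1).
Proof.
apply: is_derive_congr (is_derive_pow id n t 1 (is_derive_id t)) => [s|].
  by rewrite RpowE.
by rewrite RpowE INRE !RmultE mulr1.
Qed.

Lemma is_derive_sum (I : Type) (r : seq I) (F : I -> R -> R) dF t :
  (forall i, is_derive (F i) t (dF i)) ->
  is_derive (fun s => \sum_(i <- r) F i s) t (\sum_(i <- r) dF i).
Proof.
move=> hF; elim: r => [|i r IH].
  by apply: is_derive_congr (is_derive_cst 0 t) => [s|]; rewrite big_nil.
by apply: is_derive_congr (is_deriveD (hF i) IH) => [s|]; rewrite big_cons.
Qed.

End RealDerivatives.

(* Arguments of type [R] are otherwise parsed in Stdlib's [R_scope]. *)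
Arguments is_deriveZ f a%_ring_scope t df.
Arguments is_derive_cst a%_ring_scope t.

Definition gauss (x y : R) : R := exp (- (x - y) ^ 2)%R.

Lemma is_derive_gauss_x (x y : R) :
  is_derive (gauss^~ y) x (- (2 * (x - y) * gauss x y)).
Proof.
rewrite /gauss; auto_derive => //.
by rewrite !(RmultE, RplusE, RoppE, R1E); ring.
Qed.

Lemma is_derive_gauss_y (x y : R) : is_derive (gauss x) y (2 * (x - y) * gauss x y).
Proof.
rewrite /gauss; auto_derive => //.
by rewrite !(RmultE, RplusE, RoppE, R1E); ring.
Qed.

Lemma is_derive_Erf_x (x y : R) : is_derive (fun x' => Erf (x' - y)) x (gauss x y).
Proof.
have inner : is_derive (fun x' => x' - y)%R x 1 by auto_derive => //; ring.
have := is_derive_comp _ _ x _ _ (is_derive_Erf (x - y)) inner.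
by rewrite /scal /= /mult /= Rmult_1_l.
Qed.

Lemma is_derive_Erf_y (x y : R) : is_derive (fun y' => Erf (x - y')) y (- gauss x y).
Proof.
have inner : is_derive (fun y' => x - y')%R y (-1) by auto_derive => //; ring.
have := is_derive_comp _ _ y _ _ (is_derive_Erf (x - y)) inner.
by rewrite /scal /= /mult /= -Ropp_mult_distr_l Rmult_1_l.
Qed.

Section TotalDegree.
Variable K : nzRingType.
Implicit Types (P Q : {poly {poly K}}) (a : K) (c : {poly K}).

Definition tdeg_lt P N := forall i j, (N <= i + j)%N -> P`_j`_i = 0.

Lemma tdeg_lt_leq P N N' : tdeg_lt P N -> (N <= N')%N -> tdeg_lt P N'.
Proof. by move=> hP le i j ge; apply: hP; lia. Qed.

Lemma tdeg_lt0 N : tdeg_lt 0 N.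
Proof. by move=> i j _; rewrite !coef0. Qed.

Lemma tdeg_ltD P Q N : tdeg_lt P N -> tdeg_lt Q N -> tdeg_lt (P + Q) N.
Proof. by move=> hP hQ i j ge; rewrite !coefD hP ?hQ ?addr0. Qed.

Lemma tdeg_ltN P N : tdeg_lt P N -> tdeg_lt (- P) N.
Proof. by move=> hP i j ge; rewrite !coefN hP ?oppr0. Qed.

Lemma tdeg_ltB P Q N : tdeg_lt P N -> tdeg_lt Q N -> tdeg_lt (P - Q) N.
Proof. by move=> hP hQ; apply/tdeg_ltD/tdeg_ltN. Qed.

Lemma tdeg_lt_sum (I : Type) (r : seq I) (F : I -> {poly {poly K}}) N :
  (forall k, tdeg_lt (F k) N) -> tdeg_lt (\sum_(k <- r) F k) N.
Proof.
move=> hF; apply: (big_ind (tdeg_lt^~ N)) => //; first exact: tdeg_lt0.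
by move=> P Q; exact: tdeg_ltD.
Qed.

Lemma tdeg_ltM P Q N1 N2 :
  tdeg_lt P N1 -> tdeg_lt Q N2 -> tdeg_lt (P * Q) (N1 + N2).-1.
Proof.
move=> hP hQ i j ge; rewrite coefM coef_sum big1 // => k _; rewrite coefM big1 // => l _.
have [/hP -> | lt] := leqP N1 (l + k); first by rewrite mul0r.
by rewrite hQ ?mulr0 //; move: (ltn_ord k) (ltn_ord l); lia.
Qed.

Lemma tdeg_ltC c : tdeg_lt c%:P (size c).
Proof. by move=> i [|j] ge; rewrite coefC /= ?coef0 // nth_default // -(addn0 i). Qed.

Lemma tdeg_ltCC a : tdeg_lt a%:P%:P 1.
Proof. by apply: tdeg_lt_leq (@tdeg_ltC a%:P) _; rewrite size_polyC leq_b1. Qed.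

Lemma tdeg_lt_polyCX : tdeg_lt 'X%:P 2.
Proof. by have := @tdeg_ltC 'X; rewrite size_polyX. Qed.

Lemma tdeg_lt_swapXY P N : tdeg_lt P N -> tdeg_lt (swapXY P) N.
Proof. by move=> hP i j ge; rewrite coef_swapXY hP // addnC. Qed.

Lemma tdeg_lt_polyX : tdeg_lt 'X 2.
Proof. by rewrite -swapXY_Y; apply/tdeg_lt_swapXY/tdeg_lt_polyCX. Qed.

Lemma tdeg_ltXn P k : tdeg_lt P 2 -> tdeg_lt (P ^+ k) k.+1.
Proof.
move=> hP; elim: k => [|k IH]; last by rewrite exprS; apply: tdeg_lt_leq (tdeg_ltM hP IH) _.
by move=> i [|j] ge; rewrite expr0 coefC //= coefC; case: i ge.
Qed.

Lemma size_coef_tdeg_lt P N j : tdeg_lt P N -> leq (size P`_j) (N - j)%N.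
Proof. by move=> hP; apply/leq_sizeP => i ge; apply: hP; lia. Qed.

Lemma coef_tdeg_lt P N j : tdeg_lt P N -> (N <= j)%N -> P`_j = 0.
Proof. by move=> hP le; apply/polyP => i; rewrite coef0 hP //; lia. Qed.

End TotalDegree.

(* [tdeg_lt] unfolds to a product, so the parameters of the lemmas below would
   otherwise become implicit. *)
Unset Implicit Arguments.

Lemma totsize_leq (P : bipoly) N : tdeg_lt P N -> leq (totsize P) N.
Proof.
move=> hP; apply/bigmax_leqP => j; rewrite -size_poly_gt0 => nz_j.
have := size_coef_tdeg_lt j hP; move: nz_j; set s := size _; lia.
Qed.

Lemma leq_totsize (P : bipoly) j : P`_j != 0 -> leq (addn (size P`_j) j) (totsize P).
Proof.
move=> nz_j; have j_lt : (j < size P)%N.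
  by rewrite ltnNge; apply: contra nz_j => /(nth_default 0) ->.
exact: (leq_bigmax_cond (Ordinal j_lt) nz_j).
Qed.

Lemma totsize_top (P : bipoly) N c :
  tdeg_lt P N.+1 -> P`_N = c%:P -> c != 0 -> totsize P = N.+1.
Proof.
move=> hP PN nz_c; apply/eqP; rewrite eqn_leq totsize_leq //=.
by have := @leq_totsize P N; rewrite PN size_polyC polyC_eq0 nz_c; apply.
Qed.

Lemma u1 : u 1 = - (1 / 2%:R)%:P%:P.
Proof. by rewrite /u /= !mulr0 !add0r expr0 mulr1. Qed.

Lemma u_rec k :
  u k.+2 = Yv * u k.+1 + (k.+1%:R / 2%:R)%:P%:P * u k - (1 / 2%:R)%:P%:P * Xv ^+ k.+1.
Proof. by rewrite /u /=; case: (u_aux k). Qed.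

Lemma v1 : v 1 = 'X.
Proof. by rewrite /v /= mulr1 mulr0 addr0. Qed.

Lemma v_rec k : v k.+2 = 'X * v k.+1 + (k.+1%:R / 2%:R)%:P * v k.
Proof. by rewrite /v /=; case: (v_aux k). Qed.

Lemma v_monic k : v k \is monic /\ size (v k) = k.+1.
Proof.
elim/ltn_ind: k => -[|[|k]] IH; first by rewrite monic1 size_poly1.
  by rewrite v1 monicX size_polyX.
have [mon1 size1] := IH k.+1 (ltnSn _); have [_ size0] := IH k (ltnW (ltnSn _)).
rewrite v_rec mulrC; set lower := _ * v k; set top := v k.+1 * 'X.
have size_top : size top = k.+3 by rewrite size_mulX ?monic_neq0 ?size1.
have lt : (size lower < size top)%N.
  rewrite size_top (leq_ltn_trans (size_polyMleq _ _)) // size_polyC size0.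
  by case: (_ != _) => /=; lia.
split; last by rewrite size_polyDl // size_top.
by apply/monicP; rewrite lead_coefDl // lead_coefMX (eqP mon1).
Qed.

Lemma tdeg_lt_u k : tdeg_lt (u k) k.
Proof.
elim/ltn_ind: k => -[|[|k]] IH; first exact: tdeg_lt0.
  by rewrite u1; apply/tdeg_ltN/tdeg_ltCC.
rewrite u_rec; apply: tdeg_ltB; first apply: tdeg_ltD.
- exact: tdeg_ltM (tdeg_lt_polyX _) (IH _ (ltnSn _)).
- by apply: tdeg_lt_leq (tdeg_ltM (tdeg_ltCC _) (IH _ (ltnW (ltnSn _)))) _; lia.
- exact: tdeg_ltM (tdeg_ltCC _) (tdeg_ltXn (tdeg_lt_polyCX _)).
Qed.

Lemma coef_u_top k : (u k.+1)`_0`_k = - (1 / 2%:R).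
Proof.
case: k => [|k]; first by rewrite u1 coefN coefC coefN coefC.
rewrite u_rec !coefB !coefD coefXM coefCM -rmorphXn -polyCM /= !coefC /= !coefCM coefXn eqxx.
by rewrite tdeg_lt_u ?mulr0 ?mulr1 ?add0r // addn0.
Qed.

Lemma coef_u_swap_top k : (u_swap k.+1)`_k = (- (1 / 2%:R))%:P.
Proof.
apply/polyP => -[|i]; rewrite coef_swapXY coefC /=; first exact: coef_u_top.
by rewrite tdeg_lt_u //; lia.
Qed.

Section DegreesOfPQ.
Variables n m : nat.

Lemma size_vXn : size (v n * 'X ^+ m) = (n + m).+1.
Proof.
have [mon sz] := v_monic n.
by rewrite size_mulXn ?monic_neq0 // sz addnS addnC.
Qed.

Lemma beta_top : beta n m (n + m) = 1.
Proof.
have [mon sz] := v_monic n.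
by rewrite /beta coefMXn ltnNge leq_addl /= addnK -(eqP mon) lead_coefE sz.
Qed.

Lemma tdeg_lt_uXn : tdeg_lt (u n * 'X ^+ m) (n + m).
Proof.
by apply: tdeg_lt_leq (tdeg_ltM (tdeg_lt_u n) (tdeg_ltXn (tdeg_lt_polyX _))) _; lia.
Qed.

Lemma tdeg_lt_alpha k : tdeg_lt (alpha n m k)%:P (n + m - k).
Proof. exact: tdeg_lt_leq (@tdeg_ltC _ (alpha n m k)) (size_coef_tdeg_lt k tdeg_lt_uXn). Qed.

Lemma tdeg_lt_pv_term c k : tdeg_lt (c%:P%:P * u_swap k.+1) k.+1.
Proof. exact: tdeg_ltM (tdeg_ltCC _) (tdeg_lt_swapXY (tdeg_lt_u _)). Qed.

Lemma tdeg_lt_qv_term c k : tdeg_lt (c%:P%:P * (Yv ^+ k.+1 - v_at_x k.+1)) k.+2.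
Proof.
apply: tdeg_ltM (tdeg_ltCC _) (tdeg_ltB (tdeg_ltXn (tdeg_lt_polyX _)) _).
by have [_ <-] := v_monic k.+1; apply: tdeg_ltC.
Qed.

Lemma pv_top : pv n m = \sum_(k < n + m) (beta n m k / k.+1%:R)%:P%:P * u_swap k.+1
                        + ((n + m).+1%:R^-1)%:P%:P * u_swap (n + m).+1.
Proof. by rewrite /pv size_vXn big_ord_recr /= beta_top div1r. Qed.

Lemma qv_top : qv n m =
  \sum_(k < n + m) (beta n m k / k.+1%:R)%:P%:P * (Yv ^+ k.+1 - v_at_x k.+1)
  + ((n + m).+1%:R^-1)%:P%:P * (Yv ^+ (n + m).+1 - v_at_x (n + m).+1).
Proof. by rewrite /qv size_vXn big_ord_recr /= beta_top div1r. Qed.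

Lemma tdeg_lt_pu : tdeg_lt (pu n m) (n + m).
Proof.
apply: tdeg_lt_sum => k; have [le_k|lt_k] := leqP (n + m) k.
  by rewrite /alpha (coef_tdeg_lt tdeg_lt_uXn le_k) mul0r; apply: tdeg_lt0.
by apply: tdeg_lt_leq (tdeg_ltM (tdeg_lt_alpha k) (tdeg_lt_swapXY (tdeg_lt_u k))) _; lia.
Qed.

Lemma tdeg_lt_qu : tdeg_lt (qu n m) (n + m).+1.
Proof.
apply/tdeg_ltN/tdeg_lt_sum => k; have [le_k|lt_k] := leqP (n + m) k.
  by rewrite /alpha (coef_tdeg_lt tdeg_lt_uXn le_k) mul0r; apply: tdeg_lt0.
have [_ size_v] := v_monic k.
apply: tdeg_lt_leq (tdeg_ltM (tdeg_lt_alpha k) (@tdeg_ltC _ (v k))) _.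
by rewrite size_v; lia.
Qed.

Lemma tdeg_lt_p : tdeg_lt (p n m) (n + m).+1.
Proof.
rewrite /p pv_top; apply: tdeg_ltD; first exact: tdeg_lt_leq tdeg_lt_pu _.
apply: tdeg_ltD (tdeg_lt_pv_term _ _); apply: tdeg_lt_sum => k.
by apply: tdeg_lt_leq (tdeg_lt_pv_term _ _) _; have := ltn_ord k; lia.
Qed.

Lemma tdeg_lt_q : tdeg_lt (q n m) (n + m).+2.
Proof.
rewrite /q qv_top; apply: tdeg_ltD; first exact: tdeg_lt_leq tdeg_lt_qu _.
apply: tdeg_ltD (tdeg_lt_qv_term _ _); apply: tdeg_lt_sum => k.
by apply: tdeg_lt_leq (tdeg_lt_qv_term _ _) _; have := ltn_ord k; lia.
Qed.

Lemma coef_p_top : (p n m)`_(n + m) = ((n + m).+1%:R^-1 * - (1 / 2%:R))%:P.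
Proof.
rewrite /p pv_top !coefD coefCM coef_u_swap_top -polyCM.
rewrite (coef_tdeg_lt tdeg_lt_pu) // (@coef_tdeg_lt _ _ (n + m)) ?add0r //.
apply: tdeg_lt_sum => k; apply: tdeg_lt_leq (tdeg_lt_pv_term _ _) _.
exact: ltn_ord.
Qed.

Lemma coef_q_top : (q n m)`_(n + m).+1 = ((n + m).+1%:R^-1)%:P.
Proof.
rewrite /q qv_top !coefD coefCM coefB coefXn eqxx coefC /= subr0 mulr1.
rewrite (coef_tdeg_lt tdeg_lt_qu) // (@coef_tdeg_lt _ _ (n + m).+1) ?add0r //.
apply: tdeg_lt_sum => k; apply: tdeg_lt_leq (tdeg_lt_qv_term _ _) _.
exact: ltn_ord.
Qed.

Lemma totsize_p : totsize (p n m) = (n + m).+1.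
Proof.
apply: totsize_top tdeg_lt_p coef_p_top _.
by rewrite mulf_neq0 ?oppr_eq0 ?invr_eq0 ?pnatr_eq0 // div1r invr_eq0 pnatr_eq0.
Qed.

Lemma totsize_q : totsize (q n m) = (n + m).+2.
Proof. by apply: totsize_top tdeg_lt_q coef_q_top _; rewrite invr_eq0 pnatr_eq0. Qed.
End DegreesOfPQ.

Definition ev1 (t : R) (c : {poly rat}) : R := (map_poly ratr c).[t].
HB.instance Definition _ t :=
  GRing.RMorphism.copy (ev1 t) (horner_eval t \o map_poly ratr).

Definition ev2 (x y : R) (P : bipoly) : R := (map_poly (map_poly ratr) P).[y%:P].[x].
HB.instance Definition _ x y := GRing.RMorphism.copy (ev2 x y)
  (horner_eval x \o horner_eval y%:P \o map_poly (map_poly ratr)).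

Lemma ev1X t : ev1 t 'X = t.
Proof. by rewrite /ev1 map_polyX hornerX. Qed.

Lemma ev1C t a : ev1 t a%:P = ratr a.
Proof. by rewrite /ev1 map_polyC hornerC. Qed.

Lemma ev1E t c : ev1 t c = \sum_(i < size c) ratr c`_i * t ^+ i.
Proof.
rewrite /ev1 horner_coef size_map_poly.
by apply: eq_bigr => i _; rewrite coef_map.
Qed.

Lemma ev2C x y c : ev2 x y c%:P = ev1 x c.
Proof. by rewrite /ev2 map_polyC hornerC. Qed.

Lemma ev2CC x y a : ev2 x y a%:P%:P = ratr a.
Proof. by rewrite ev2C ev1C. Qed.

Lemma ev2_Xv x y : ev2 x y Xv = x.
Proof. by rewrite ev2C ev1X. Qed.

Lemma ev2_Yv x y : ev2 x y Yv = y.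
Proof. by rewrite /ev2 map_polyX hornerX hornerC. Qed.

Lemma ev2_swapXY x y P : ev2 x y (swapXY P) = ev2 y x P.
Proof. by rewrite /ev2 -swapXY_map; exact: horner2_swapXY. Qed.

Lemma ev2E x y P : ev2 x y P = \sum_(j < size P) ev1 x P`_j * y ^+ j.
Proof.
rewrite /ev2 (horner_coef (map_poly _ P)).
rewrite size_map_inj_poly ?rmorph0 //; last exact: map_poly_inj.
rewrite horner_sum; apply: eq_bigr => j _.
by rewrite coef_map /= hornerM -rmorphXn /= hornerC.
Qed.

Lemma evalXYE P x y : evalXY P x y = ev2 x y P.
Proof.
rewrite ev2E; apply: eq_bigr => j _.
by rewrite ev1E mulr_suml; apply: eq_bigr => i _.
Qed.

Lemma ev2_u_rec x y k : ev2 x y (u k.+2) =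
  y * ev2 x y (u k.+1) + k.+1%:R / 2 * ev2 x y (u k) - 1 / 2 * x ^+ k.+1.
Proof.
rewrite u_rec rmorphB rmorphD !(rmorphM (ev2 x y)) (rmorphXn (ev2 x y)) /=.
by rewrite !ev2CC ev2_Xv ev2_Yv !fmorph_div !rmorph_nat rmorph1.
Qed.

Lemma ev1_v_rec t k : ev1 t (v k.+2) = t * ev1 t (v k.+1) + k.+1%:R / 2 * ev1 t (v k).
Proof.
rewrite v_rec rmorphD !(rmorphM (ev1 t)) /= ev1X.
by rewrite ev1C fmorph_div !rmorph_nat.
Qed.

Lemma is_derive_u k (x y : R) : is_derive (fun x' => ev2 x' y (u k)) x
  (x ^+ k + 2 * (x - y) * ev2 x y (u k) - ev1 y (v k)).
Proof.
elim/ltn_ind: k x => -[|[|k]] IH x.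
- apply: is_derive_congr (is_derive_cst 0 x) => [s|]; first by rewrite rmorph0.
  by rewrite rmorph0 rmorph1; ring.
- apply: is_derive_congr (is_derive_cst (- (1 / 2)) x) => [s|];
    by rewrite u1 rmorphN /= ev2CC fmorph_div rmorph1 rmorph_nat ?v1 ?ev1X; field.
apply: is_derive_congr (is_deriveB (is_deriveD (is_deriveZ y (IH k.+1 (ltnSn _) x))
    (is_deriveZ (k.+1%:R / 2) (IH k (ltnW (ltnSn _)) x)))
    (is_deriveZ (1 / 2) (is_derive_exprn k.+1 x))) => [s|].
  by rewrite ev2_u_rec.
by rewrite ev2_u_rec ev1_v_rec /= !exprS; field.
Qed.

Lemma is_derive_primitive_gauss k (x y : R) :
  is_derive (fun y' => ev2 y' x (u k) * gauss x y' - ev1 x (v k) * Erf (x - y')) y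
            (y ^+ k * gauss x y).
Proof.
apply: is_derive_congr (is_deriveB (is_deriveM (is_derive_u k y x) (is_derive_gauss_y x y))
  (is_deriveZ (ev1 x (v k)) (is_derive_Erf_y x y))) => // ; ring.
Qed.

Lemma is_derive_primitive_Erf k (x y : R) :
  is_derive (fun y' => ev2 y' x (u k.+1) * gauss x y'
                       + (y' ^+ k.+1 - ev1 x (v k.+1)) * Erf (x - y')) y
            (k.+1%:R * y ^+ k * Erf (x - y)).
Proof.
apply: is_derive_congr (is_deriveD (is_deriveM (is_derive_u k.+1 y x) (is_derive_gauss_y x y))
  (is_deriveM (is_deriveB (is_derive_exprn k.+1 y) (is_derive_cst (ev1 x (v k.+1)) y))
              (is_derive_Erf_y x y))) => //; ring.
Qed.

Section PQEvaluation.
Variables n m : nat.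

Lemma sum_alpha x y :
  \sum_(k < size (u n * 'X ^+ m)) ev1 x (alpha n m k) * y ^+ k = ev2 x y (u n) * y ^+ m.
Proof. by rewrite -[X in ev2 x y (u n) * X ^+ m](ev2_Yv x y) -rmorphXn -rmorphM /= ev2E. Qed.

Lemma sum_beta y : \sum_(k < size (v n * 'X ^+ m))
  ratr (beta n m k / k.+1%:R) * k.+1%:R * y ^+ k = ev1 y (v n) * y ^+ m.
Proof.
rewrite -[X in ev1 y (v n) * X ^+ m](ev1X y) -rmorphXn -rmorphM /= ev1E; apply: eq_bigr => k _.
by rewrite fmorph_div rmorph_nat divfK ?pnatr_eq0.
Qed.

Lemma pq_expansion x y :
  ev2 x y (p n m) * gauss x y + ev2 x y (q n m) * Erf (x - y) =
  \sum_(k < size (u n * 'X ^+ m))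
     ev1 x (alpha n m k) * (ev2 y x (u k) * gauss x y - ev1 x (v k) * Erf (x - y))
  + \sum_(k < size (v n * 'X ^+ m))
     ratr (beta n m k / k.+1%:R) *
       (ev2 y x (u k.+1) * gauss x y + (y ^+ k.+1 - ev1 x (v k.+1)) * Erf (x - y)).
Proof.
rewrite /p /q /pu /qu /pv /qv !rmorphD rmorphN !rmorph_sum /=.
rewrite !mulrDl mulNr !mulr_suml -sumrN addrACA -!big_split /=.
rewrite /u_swap /v_at_x; congr (_ + _); apply: eq_bigr => k _;
  rewrite !(rmorphM (ev2 x y)) /= ?rmorphB ?rmorphXn /= ?ev2CC ?ev2C ?ev2_Yv ev2_swapXY; ring.
Qed.

Definition pq_dy (x y : R) :=
  y ^+ m * (ev2 x y (u n) * gauss x y + ev1 y (v n) * Erf (x - y)).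

Lemma is_derive_pq_y (x y : R) :
  is_derive (fun y' => ev2 x y' (p n m) * gauss x y' + ev2 x y' (q n m) * Erf (x - y')) y
            (pq_dy x y).
Proof.
set Ku := size (u n * 'X ^+ m); set Kv := size (v n * 'X ^+ m).
apply: is_derive_congr (is_deriveD
  (is_derive_sum (index_enum 'I_Ku) (fun k => is_deriveZ (ev1 x (alpha n m k))
                                     (is_derive_primitive_gauss k x y)))
  (is_derive_sum (index_enum 'I_Kv) (fun k => is_deriveZ (ratr (beta n m k / k.+1%:R))
                                     (is_derive_primitive_Erf k x y)))) => [s|].
  by rewrite pq_expansion.
rewrite /pq_dy mulrDr !mulrA ![y ^+ m * _]mulrC -sum_alpha -sum_beta !mulr_suml.
by congr (_ + _); apply: eq_bigr => k _; ring.
Qed.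

Lemma is_derive_pq_dy_x (x y : R) : is_derive (pq_dy^~ y) x (x ^+ n * y ^+ m * gauss x y).
Proof.
apply: is_derive_congr (is_deriveZ (y ^+ m) (is_deriveD
  (is_deriveM (is_derive_u n x y) (is_derive_gauss_x x y))
  (is_deriveZ (ev1 y (v n)) (is_derive_Erf_x x y)))) => //; ring.
Qed.
End PQEvaluation.

Local Close Scope ring_scope.

Theorem corollary1 (n m : nat) :
  totsize (p n m) = (n + m).+1 /\
  totsize (q n m) = (n + m).+2 /\
  exists G : R -> R -> R,
    (forall x y : R,
       is_derive (fun y' : R => (evalXY (p n m) x y' * exp (- (x - y') ^ 2)
                                 + evalXY (q n m) x y' * Erf (x - y'))%R)
                 y (G x y)) /\
    (forall x y : R,
       is_derive (fun x' : R => G x' y) x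
                 (x ^ n * y ^ m * exp (- (x - y) ^ 2))%R).
Proof.
split; first exact: totsize_p.
split; first exact: totsize_q.
exists (pq_dy n m); split=> x y.
  by apply: is_derive_congr (is_derive_pq_y n m x y) => // s; rewrite !evalXYE.
apply: (is_derive_congr (frefl _) _ (is_derive_pq_dy_x n m x y)).
by rewrite (RpowE x) (RpowE y).
Qed.
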